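(* Let $\alpha,\beta,p,q\in\mathbb{C}$ be constants with $p^2\neq q^2$, and set $s^2=\alpha^2-p^2$, $\mu^2=\alpha^2-q^2$, $t^2=\beta^2-p^2$, $\nu^2=\beta^2-q^2$. Let $h,g:\mathbb{Z}^2\to\mathbb{C}$ satisfy $\widehat{h}-\widetilde{h}=\widetilde{\widetilde{g}}-g$ and $(h+\widetilde g)g=\beta^2-\alpha^2$. Let $\varphi$ solve $$\widetilde{\widetilde{\varphi}}+h\,\widetilde{\varphi}+\alpha^2\varphi=p^2\varphi,\qquad \widehat{\varphi}=\widetilde{\varphi}-g\,\varphi,$$ and $\phi$ solve $$\widetilde{\widetilde{\phi}}+h\,\widetilde{\phi}+\alpha^2\phi=q^2\phi,\qquad \widehat{\phi}=\widetilde{\phi}-g\,\phi .$$ Then $y=\varphi\widetilde{\phi}-\phi\widetilde{\varphi}$ solves the leKdV-II equation $$s^2\mu^2\,y\widehat{y}+\widetilde{y}\,\widehat{\widetilde{y}}-t^2\nu^2\,y\widetilde{y}-\widehat{y}\,\widehat{\widetilde{y}}-(\alpha^2-\beta^2)\big(y\,\widehat{\widetilde{y}}+\widetilde{y}\,\widehat{y}\big)=0 .$$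
   Context: Shift notation: for a function $f$ on $\mathbb{Z}^2$ (variables $n,m$), $\widetilde f(n,m)=f(n+1,m)$, $\widehat f(n,m)=f(n,m+1)$, and combined accents denote composed shifts. *)

From HB Require Import structures.
From mathcomp Require Import all_boot all_order all_algebra.
From mathcomp Require Import complex.
From mathcomp Require Import Rstruct.
From Stdlib Require Import Rdefinitions.
Set Implicit Arguments. Unset Strict Implicit. Unset Printing Implicit Defensive.
Import Order.TTheory GRing.Theory Num.Theory.
Local Open Scope ring_scope.

(* Shifts on functions Z^2 -> C: tilde shifts n, hat shifts m. *)
Definition tl {T : Type} (f : int -> int -> T) : int -> int -> T :=
  fun n m => f (n + 1) m.
Definition ht {T : Type} (f : int -> int -> T) : int -> int -> T :=
  fun n m => f n (m + 1).

(* Eliminating the shifts with the Lax pair writes y and its three shifts as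
   linear combinations of the four products X = φ ϕ̃, Y = φ̃ ϕ, U = φ ϕ and
   W = φ̃ ϕ̃, with coefficients built from s², μ², t², ν², g and k = h + g̃,
   where k g = β² - α².  Substituted into the leKdV-II polynomial they leave
   (p² - q²)² (β² - α²) (X Y - U W), which vanishes since X Y = U W. *)
From HB Require Import structures.
From mathcomp Require Import all_boot all_order all_algebra.
From mathcomp Require Import complex.
From mathcomp Require Import Rstruct.
From Stdlib Require Import Rdefinitions.
From mathcomp Require Import ring.
Import Order.TTheory GRing.Theory Num.Theory.
Local Open Scope ring_scope.

Set Implicit Arguments.
Unset Strict Implicit.

Definition casoratian {R : pzRingType} (u v : int -> int -> R) n m : R :=
  u n m * tl v n m - v n m * tl u n m.

Definition lekdv2 {R : pzRingType} (s2 mu2 t2 nu2 e y yt yh yht : R) : R :=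
  s2 * mu2 * y * yh + yt * yht - t2 * nu2 * y * yt - yh * yht
  - e * (y * yht + yt * yh).

Lemma lekdv2_products (R : comPzRingType) (a2 b2 p2 q2 g k X Y U W : R)
    (y yt yh yht : R) :
  k * g = b2 - a2 -> X * Y = U * W ->
  y = X - Y ->
  yt = (a2 - p2) * X - (a2 - q2) * Y ->
  yh = (b2 - p2) * X - (b2 - q2) * Y + (p2 - q2) * g * U ->
  yht = (a2 - p2) * (b2 - q2) * X - (a2 - q2) * (b2 - p2) * Y
        + (p2 - q2) * k * W ->
  lekdv2 (a2 - p2) (a2 - q2) (b2 - p2) (b2 - q2) (a2 - b2) y yt yh yht = 0.
Proof.
move=> kg XY -> -> -> ->; rewrite /lekdv2.
have -> : b2 = a2 + k * g by rewrite kg; ring.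
transitivity ((p2 - q2) ^+ 2 * (k * g) * (X * Y - U * W)); first by ring.
by rewrite XY subrr mulr0.
Qed.

Section LaxPair.
Variables (R : comPzRingType) (a2 b2 : R) (h g : int -> int -> R).
Hypothesis hg : forall n m, (h n m + tl g n m) * g n m = b2 - a2.

Section Eigenfunction.
Variables (p2 : R) (u : int -> int -> R).
Hypothesis u_spec :
  forall n m, tl (tl u) n m + h n m * tl u n m + a2 * u n m = p2 * u n m.
Hypothesis u_evol : forall n m, ht u n m = tl u n m - g n m * u n m.

Lemma eigen_next2 n m :
  u (n + 1 + 1) m = (p2 - a2) * u n m - h n m * u (n + 1) m.
Proof. by rewrite mulrBl -(u_spec n m) /tl; ring. Qed.

Lemma eigen_up n m : u n (m + 1) = u (n + 1) m - g n m * u n m.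
Proof. exact: u_evol. Qed.

Lemma eigen_next_up n m :
  u (n + 1) (m + 1)
  = (p2 - a2) * u n m - (h n m + g (n + 1) m) * u (n + 1) m.
Proof. by rewrite eigen_up eigen_next2; ring. Qed.

End Eigenfunction.

Variables (p2 q2 : R) (u v : int -> int -> R).
Hypothesis u_spec :
  forall n m, tl (tl u) n m + h n m * tl u n m + a2 * u n m = p2 * u n m.
Hypothesis u_evol : forall n m, ht u n m = tl u n m - g n m * u n m.
Hypothesis v_spec :
  forall n m, tl (tl v) n m + h n m * tl v n m + a2 * v n m = q2 * v n m.
Hypothesis v_evol : forall n m, ht v n m = tl v n m - g n m * v n m.

Local Notation y := (casoratian u v).

Lemma casoratian_at n m :
  y n m = u n m * v (n + 1) m - u (n + 1) m * v n m.
Proof. by rewrite /casoratian /tl mulrC [v n m * _]mulrC; ring. Qed.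

Lemma casoratian_next n m :
  y (n + 1) m
  = (a2 - p2) * (u n m * v (n + 1) m) - (a2 - q2) * (u (n + 1) m * v n m).
Proof.
by rewrite /casoratian /tl (eigen_next2 u_spec) (eigen_next2 v_spec); ring.
Qed.

Lemma casoratian_up n m :
  y n (m + 1)
  = (b2 - p2) * (u n m * v (n + 1) m) - (b2 - q2) * (u (n + 1) m * v n m)
    + (p2 - q2) * g n m * (u n m * v n m).
Proof.
have -> : b2 = a2 + (h n m + g (n + 1) m) * g n m by rewrite hg; ring.
rewrite /casoratian /tl (eigen_next_up u_spec u_evol)
  (eigen_next_up v_spec v_evol) (eigen_up u_evol) (eigen_up v_evol).
by ring.
Qed.

Lemma casoratian_next_up n m :
  y (n + 1) (m + 1)
  = (a2 - p2) * (b2 - q2) * (u n m * v (n + 1) m)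
    - (a2 - q2) * (b2 - p2) * (u (n + 1) m * v n m)
    + (p2 - q2) * (h n m + g (n + 1) m) * (u (n + 1) m * v (n + 1) m).
Proof.
have -> : b2 = a2 + (h n m + g (n + 1) m) * g n m by rewrite hg; ring.
rewrite casoratian_next (eigen_next_up u_spec u_evol)
  (eigen_next_up v_spec v_evol) (eigen_up u_evol) (eigen_up v_evol).
by ring.
Qed.

Lemma casoratian_lekdv2 n m :
  lekdv2 (a2 - p2) (a2 - q2) (b2 - p2) (b2 - q2) (a2 - b2)
    (y n m) (tl y n m) (ht y n m) (ht (tl y) n m) = 0.
Proof.
apply: (lekdv2_products (hg n m) _ (casoratian_at n m) (casoratian_next n m)
  (casoratian_up n m) (casoratian_next_up n m)).
by ring.
Qed.

End LaxPair.

Unset Implicit Arguments.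

Theorem proposition4p1
  (alpha beta p q : (Rdefinitions.R)[i])
  (hpq : p ^+ 2 != q ^+ 2)
  (h g varphi phi : int -> int -> (Rdefinitions.R)[i])
  (Hhg1 : forall n m, ht h n m - tl h n m = tl (tl g) n m - g n m)
  (Hhg2 : forall n m, (h n m + tl g n m) * g n m = beta ^+ 2 - alpha ^+ 2)
  (Hvp1 : forall n m, tl (tl varphi) n m + h n m * tl varphi n m
                        + alpha ^+ 2 * varphi n m = p ^+ 2 * varphi n m)
  (Hvp2 : forall n m, ht varphi n m = tl varphi n m - g n m * varphi n m)
  (Hph1 : forall n m, tl (tl phi) n m + h n m * tl phi n m
                        + alpha ^+ 2 * phi n m = q ^+ 2 * phi n m)
  (Hph2 : forall n m, ht phi n m = tl phi n m - g n m * phi n m) :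
  let s2 := alpha ^+ 2 - p ^+ 2 in
  let mu2 := alpha ^+ 2 - q ^+ 2 in
  let t2 := beta ^+ 2 - p ^+ 2 in
  let nu2 := beta ^+ 2 - q ^+ 2 in
  let y := fun n m => varphi n m * tl phi n m - phi n m * tl varphi n m in
  forall n m,
    s2 * mu2 * y n m * ht y n m + tl y n m * ht (tl y) n m
    - t2 * nu2 * y n m * tl y n m - ht y n m * ht (tl y) n m
    - (alpha ^+ 2 - beta ^+ 2) * (y n m * ht (tl y) n m + tl y n m * ht y n m)
    = 0.
Proof.
move=> s2 mu2 t2 nu2 y n m.
exact: (casoratian_lekdv2 Hhg2 Hvp1 Hvp2 Hph1 Hph2).
Qed.
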